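(* Let $G$ be a finite group with $|G| = 30p$, where $p$ is a prime with $p \ge 7$. Then: (1) the commutator subgroup $G'$ is cyclic; (2) $G' \cap Z(G) = \{e\}$; (3) $G \cong \mathbb{Z}_n \ltimes G'$ for some positive integer $n$; and (4) if $b$ is a generator of the factor $\mathbb{Z}_n$ in (3), and $\tau \in \mathbb{Z}$ is chosen such that $x^b = x^\tau$ for all $x \in G'$, then $\gcd(\tau - 1, |G'|) = 1$.
   Context: $G' = [G,G]$ is the commutator subgroup, $Z(G)$ the center, and $x^b = b^{-1} x b$ denotes conjugation. *)

From mathcomp Require Import all_boot all_order all_algebra all_fingroup all_solvable.
Set Implicit Arguments. Unset Strict Implicit. Unset Printing Implicit Defensive.

Definition expgz (gT : finGroupType) (x : gT) (z : int) : gT :=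
  match z with
  | Posz n => (x ^+ n)%g
  | Negz n => (x ^- n.+1)%g
  end.

From mathcomp Require Import all_boot all_order all_algebra all_fingroup all_solvable.
From mathcomp Require Import zify.

(* Groups of squarefree order, such as 30p, have cyclic Sylow subgroups. Burnside's
   transfer argument gives a normal complement to the Sylow subgroup for the smallest
   prime; by induction the Sylow subgroup R for the largest prime is normal.  G acts on
   the cyclic group R through the abelian group Aut R, so G' centralizes R, and
   G'/R = (G/R)' is cyclic by induction; hence G' is abelian, thus cyclic.  Then G' is a
   normal Hall subgroup with an abelian (hence cyclic) Schur-Zassenhaus complement H, and
   since G/[G', H] is abelian, [G', H] = G', so coprime action gives C_G'(H) = 1.  This
   fixed-point-freeness contains both Z(G) :&: G' = 1 and the coprimality of tau - 1. *)

Set Implicit Arguments.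
Unset Strict Implicit.
Unset Printing Implicit Defensive.

Local Open Scope group_scope.

(* Since logn q 0 = 0, squarefree 0 holds; lemmas assume positivity where it matters. *)
Definition squarefree (n : nat) := forall q, prime q -> logn q n <= 1.

Lemma squarefree_dvd m n : 0 < n -> m %| n -> squarefree n -> squarefree m.
Proof.
by move=> n_gt0 m_dv_n sq_n q q_pr; apply: leq_trans (sq_n q q_pr); apply: dvdn_leq_log.
Qed.

Lemma logn_squarefree q n : prime q -> 0 < n -> squarefree n -> logn q n = (q %| n : nat).
Proof.
move=> q_pr n_gt0 /(_ q q_pr); have := logn_gt0 q n; rewrite mem_primes q_pr n_gt0 /=.
by case: (q %| n) (logn q n) => [] [|[|]].
Qed.

Lemma squarefree_coprime d e : 0 < d * e -> squarefree (d * e) -> coprime d e.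
Proof.
rewrite muln_gt0 => /andP[d_gt0 e_gt0] sq_de; rewrite coprime_has_primes //.
apply/hasPn => s; rewrite !mem_primes => /and3P[s_pr _ s_dv_e].
apply/negP => /and3P[_ _ s_dv_d]; have := sq_de s s_pr; rewrite lognM //.
have := logn_gt0 s d; have := logn_gt0 s e.
rewrite !mem_primes s_pr d_gt0 e_gt0 s_dv_d s_dv_e; lia.
Qed.

Lemma coprime_pdiv_pred n : 1 < n -> coprime n (pdiv n).-1.
Proof.
move=> n_gt1; have q_gt1 := prime_gt1 (pdiv_prime n_gt1).
have d_le : gcdn n (pdiv n).-1 <= (pdiv n).-1.
  by rewrite dvdn_leq ?dvdn_gcdr //; lia.
rewrite /coprime eqn_leq gcdn_gt0 (ltnW n_gt1) andbT leqNgt.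
apply/negP => d_gt1.
by have := pdiv_min_dvd d_gt1 (dvdn_gcdl _ _); lia.
Qed.

Lemma squarefree_30p p : prime p -> 7 <= p -> squarefree (30 * p).
Proof.
move=> p_pr p_ge7 q q_pr; rewrite -[30]/(2 * (3 * 5))%N.
by rewrite !lognM ?muln_gt0 ?prime_gt0 // !logn_prime //; lia.
Qed.

Section SquarefreeGroups.

Variable gT : finGroupType.
Implicit Types G Q A : {group gT}.

Lemma card_Sylow_squarefree G q Q :
  squarefree #|G| -> prime q -> q.-Sylow(G) Q -> #|Q| = (q ^ (q %| #|G|))%N.
Proof. by move=> sqG q_pr sylQ; rewrite (card_Hall sylQ) p_part logn_squarefree. Qed.

Lemma squarefree_Zgroup G : squarefree #|G| -> Zgroup G.
Proof.
move=> sqG; apply/forall_inP => V /SylowP[q q_pr sylV].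
apply: (dvdn_prime_cyclic q_pr); rewrite (card_Sylow_squarefree sqG q_pr sylV).
by case: (q %| #|G|); rewrite ?dvd1n.
Qed.

Lemma squarefree_abelian_cyclic A : squarefree #|A| -> abelian A -> cyclic A.
Proof. by move=> sqA abA; rewrite nil_Zgroup_cyclic ?squarefree_Zgroup ?abelian_nil. Qed.

End SquarefreeGroups.

Section BurnsideNormalComplementPrime.

Import GRing.Theory.

Variables (gT : finGroupType) (G Q : {group gT}) (q : nat).
Hypotheses (q_pr : prime q) (sylQ : q.-Sylow(G) Q) (oQ : #|Q| = q).
Hypothesis nQcQ : 'N_G(Q) \subset 'C(Q).

Let sQG : Q \subset G. Proof. exact: pHall_sub sylQ. Qed.

Let abQ : abelian (idm Q @* Q).
Proof. by rewrite morphim_idm // cyclic_abelian ?prime_cyclic ?oQ. Qed.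

Local Notation tr := (transfer_morphism G abQ).

Lemma order_prime_Sylow_elt g : g \in Q -> g != 1 -> #[g] = q.
Proof. by move=> Qg; apply: nt_prime_order; rewrite // -oQ expg_cardG. Qed.

Lemma index_rcoset_cycle_1_or_prime g x : g \in Q -> g != 1 ->
  #|<[g]> : Q :* x| = 1%N \/ #|<[g]> : Q :* x| = q.
Proof.
move=> Qg ntg; have n_dv_q : #|<[g]> : Q :* x| %| q.
  rewrite -(order_prime_Sylow_elt Qg ntg) /indexg -orbitRs card_orbit.
  exact: dvdn_indexg.
by case/primeP: q_pr => _ /(_ _ n_dv_q) /orP[] /eqP; [left | right].
Qed.

(* Q is generated by g, so a conjugate of g lying in Q forces x^-1 into N_G(Q) = C_G(Q). *)
Lemma conj_fixed_index_rcoset_cycle1 g x : g \in Q -> g != 1 -> x \in G ->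
  #|<[g]> : Q :* x| = 1%N -> g ^ x^-1 = g.
Proof.
move=> Qg ntg Gx nx1.
have defQ : <[g]> = Q by rewrite -(nt_gen_prime (G := Q)) ?oQ // !inE ntg.
have Qgx : g ^ x^-1 \in Q.
  have := mulg_exp_card_rcosets Q g x; rewrite nx1 expg1 mem_rcoset.
  by rewrite conjgE invgK mulgA.
have NQx : x^-1 \in 'N_G(Q).
  rewrite inE groupV Gx; apply/normP/eqP.
  by rewrite eqEcard cardJg leqnn andbT -{1}defQ -cycleJ cycle_subG.
by rewrite conjgE -(centP (subsetP nQcQ _ NQx) g Qg) mulKg.
Qed.

(* The transfer of g is g^k, where k is the number of Q-cosets fixed by g; the other
   <[g]>-orbits have size q, so k = |G : Q| (mod q) is prime to q. *)
Lemma transfer_prime_Sylow_neq0 g : g \in Q -> g != 1 -> tr g != 0%R.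
Proof.
move=> Qg ntg; have Gg : g \in G := subsetP sQG g Qg.
pose X := transversal (rcosets Q G :* <[g]>) G.
have trX : is_transversal X (rcosets Q G :* <[g]>) G.
  exact: transversalP (rcosets_cycle_partition sQG Gg).
have sXG : X \subset G := transversal_sub trX.
pose n x := #|<[g]> : Q :* x|.
pose B := [set x | n x == 1%N].
have n_Bq x : x \notin B -> n x = q.
  by rewrite inE /n; case: (index_rcoset_cycle_1_or_prime x Qg ntg) => ->.
have tr_expand := transfer_cycle_expansion sQG abQ Gg trX.
set fm := restrm _ _ in tr_expand.
have val_fm : val (fm g) = g.
  by rewrite /fm /= FiniteModule.fmodKcond mem_morphim.
have tr_g : tr g = (fm g *+ #|X :&: B|)%R.
  rewrite /= tr_expand (big_setID B) /=.
  rewrite [X in (_ + X)%R]big1 ?addr0 => [|x /setDP[_ /n_Bq nx]]; last first.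
    rewrite -/(n x) nx -(order_prime_Sylow_elt Qg ntg) expg_order conj1g.
    by apply: val_inj; rewrite /= FiniteModule.fmodKcond FiniteModule.fmval0 group1.
  rewrite -sumr_const; apply: eq_bigr => x /setIP[Xx]; rewrite inE => /eqP nx1.
  rewrite -/(n x) nx1 expg1 conj_fixed_index_rcoset_cycle1 //.
  exact: subsetP sXG x Xx.
have indexQ : (#|X :&: B| + #|X :\: B| * q)%N = #|G : Q|.
  rewrite -(sum_index_rcosets_cycle sQG Gg trX) (big_setID B) /= -sum1_card.
  rewrite -sum_nat_const; congr (_ + _)%N; apply: eq_bigr => x.
    by case/setIP=> _; rewrite inE => /eqP.
  by case/setDP=> _ /n_Bq.
have q'i : ~~ (q %| #|G : Q|) by have /and3P[_ _] := sylQ; rewrite p'natE.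
apply/eqP => tr0; have: val (tr g) = 1 by rewrite tr0 FiniteModule.fmval0.
rewrite tr_g FiniteModule.fmvalZ val_fm => /eqP.
rewrite -order_dvdn (order_prime_Sylow_elt Qg ntg) => q_dv.
by move: q'i; rewrite -indexQ dvdn_addr ?dvdn_mull.
Qed.

(* The transfer takes values in a copy of Q, so its kernel has index at most q. *)
Theorem Burnside_normal_complement_prime : exists K : {group gT}, K ><| Q = G.
Proof.
have nKG : 'ker tr <| G := ker_normal tr.
have tiKQ : 'ker tr :&: Q = 1.
  apply/trivgP/subsetP => g /setIP[/mker trg Qg]; apply/set1P/eqP/negP => /negP ntg.
  by move: (transfer_prime_Sylow_neq0 Qg ntg); rewrite trg eqxx.
exists ('ker tr)%G; rewrite sdprodE ?(subset_trans sQG (normal_norm nKG)) //.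
apply/eqP; rewrite eqEcard mul_subG ?(normal_sub nKG) //= TI_cardMg //.
rewrite -(Lagrange (normal_sub nKG)) leq_mul2l oQ.
have <- : #|tr @* G| = #|G : 'ker tr| by rewrite card_morphim setIid.
apply/orP; right; apply: leq_trans (max_card _) _.
rewrite -(card_imset _ val_inj) -oQ; apply: subset_leq_card.
apply/subsetP => _ /imsetP[u _ ->].
by have /morphimP[y _ Qy ->] := FiniteModule.fmodP u.
Qed.

End BurnsideNormalComplementPrime.

Lemma norm_sub_cent_coprime_Aut (gT : finGroupType) (G Q : {group gT}) :
  coprime #|G| #|Aut Q| -> 'N_G(Q) \subset 'C(Q).
Proof.
move=> coGA; rewrite -ker_conj_aut ker_trivg_morphim subsetIr /=.
set A := conj_aut Q @* _.
have A_dv_G : #|A| %| #|G| := dvdn_trans (dvdn_morphim _ _) (cardSg (subsetIl _ _)).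
have A_dv_Aut : #|A| %| #|Aut Q| := cardSg (Aut_conj_aut _ _).
have : coprime #|A| #|A| by apply: coprime_dvdr A_dv_Aut (coprime_dvdl A_dv_G coGA).
by rewrite /coprime gcdnn => /eqP/card1_trivg/trivgP.
Qed.

Lemma der1_sub_cent_cyclic (gT : finGroupType) (G R : {group gT}) :
  cyclic R -> G \subset 'N(R) -> G^`(1) \subset 'C(R).
Proof.
move=> cycR nRG; rewrite -ker_conj_aut ker_trivg_morphim (subset_trans (der_sub 1 G)) //=.
have abGR := abelianS (Aut_conj_aut R G) (Aut_cyclic_abelian cycR).
by rewrite morphim_der // (derG1P abGR).
Qed.

Lemma cyclic_quotient_cent_abelian (gT : finGroupType) (A R : {group gT}) :
  abelian R -> A \subset 'N(R) -> A \subset 'C(R) -> cyclic (A / R) -> abelian A.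
Proof.
move=> abR nRA cRA /cyclicP[y defAR].
have /morphimP[x _ Ax defy] : y \in A / R by rewrite defAR cycle_id.
have : A / R \subset <[x]> / R by rewrite defAR defy quotient_cycle ?(subsetP nRA).
rewrite quotientSK // => sAxR; apply: abelianS sAxR _.
by rewrite abelianM cycle_abelian abR cycle_subG (subsetP cRA).
Qed.

Lemma normal_Sylow_max_prime (gT : finGroupType) (G : {group gT}) r :
  squarefree #|G| -> {in primes #|G|, forall s, s <= r} -> r.-Sylow(G) 'O_r(G).
Proof.
elim: {G}_.+1 {-2}G (ltnSn #|G|) => // n IHn G leGn sqG r_max.
have [rG | r'G] := boolP (r.-group G).
  by rewrite pcore_pgroup_id // pHallE subxx /= part_pnat_id.
have G_gt1 : 1 < #|G|.
  rewrite ltnNge; apply: contra r'G => G_le1.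
  by rewrite (card_le1_trivg G_le1) pgroup1.
set q := pdiv #|G|; have q_pr : prime q := pdiv_prime G_gt1.
have q_min s : s \in primes #|G| -> q <= s.
  by rewrite mem_primes => /and3P[s_pr _ s_dv]; apply: pdiv_min_dvd (prime_gt1 s_pr) s_dv.
have r'q : q != r.
  apply: contra r'G => /eqP q_r; apply/pgroupP => s s_pr s_dv.
  have s_G : s \in primes #|G| by rewrite mem_primes s_pr cardG_gt0.
  by rewrite inE eqn_leq r_max // -q_r q_min.
have [Q sylQ] := Sylow_exists q G.
have oQ : #|Q| = q by rewrite (card_Sylow_squarefree sqG q_pr sylQ) pdiv_dvd.
have nQcQ : 'N_G(Q) \subset 'C(Q).
  apply: norm_sub_cent_coprime_Aut.
  by rewrite card_Aut_cyclic ?prime_cyclic ?oQ // totient_prime // coprime_pdiv_pred.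
have [K defG] := Burnside_normal_complement_prime q_pr sylQ oQ nQcQ.
have [nKG _ _ _ _] := sdprod_context defG.
have oG : (#|K| * q)%N = #|G| by rewrite -oQ (sdprod_card defG).
have K_dv_G : #|K| %| #|G| by rewrite -oG dvdn_mulr.
have ltKn : #|K| < n.
  by apply: leq_trans _ (leGn : #|G| <= n); rewrite -oG ltn_Pmulr ?prime_gt1.
have sylRK : r.-Sylow(K) 'O_r(K).
  apply: IHn ltKn (squarefree_dvd (cardG_gt0 G) K_dv_G sqG) _ => s.
  rewrite mem_primes => /and3P[s_pr _ s_dv]; apply: r_max.
  by rewrite mem_primes s_pr cardG_gt0 (dvdn_trans s_dv K_dv_G).
have nRG : 'O_r(K) <| G := char_normal_trans (pcore_char _ _) nKG.
suff sylRG : r.-Sylow(G) 'O_r(K) by rewrite (normal_Hall_pcore sylRG nRG).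
rewrite pHallE (subset_trans (pcore_sub _ _) (normal_sub nKG)) (card_Hall sylRK) /=.
rewrite -oG partnM ?cardG_gt0 ?prime_gt0 // (part_p'nat (n := q)) ?muln1 //.
by rewrite pnatE // !inE.
Qed.

Theorem squarefree_der1_cyclic (gT : finGroupType) (G : {group gT}) :
  squarefree #|G| -> cyclic G^`(1).
Proof.
move: {2}#|G|.+1 (ltnSn #|G|) => n; elim: n gT G => // n IHn gT G leGn sqG.
have sqG' : squarefree #|G^`(1)| by apply: squarefree_dvd sqG; rewrite ?cardSg ?der_sub.
have [G_le1 | G_gt1] := leqP #|G| 1.
  by apply: cyclicS (der_sub 1 G) _; rewrite (card_le1_trivg G_le1) cyclic1.
set r := max_pdiv #|G|.
set R := 'O_r(G).
have sylR : r.-Sylow(G) R.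
  by apply: normal_Sylow_max_prime => // s s_G; apply: max_pdiv_max.
have oR : #|R| = r.
  by rewrite (card_Sylow_squarefree sqG (max_pdiv_prime G_gt1) sylR) max_pdiv_dvd.
have nRG : G \subset 'N(R) := gFnorm _ _.
have cycR : cyclic R by rewrite prime_cyclic ?oR ?max_pdiv_prime.
have nRG' : G^`(1) \subset 'N(R) := subset_trans (der_sub 1 G) nRG.
apply: squarefree_abelian_cyclic (cyclic_quotient_cent_abelian _ nRG' _ _) => //.
- exact: cyclic_abelian.
- exact: der1_sub_cent_cyclic.
rewrite quotient_der //; apply: IHn.
  apply: leq_trans (ltn_quotient _ (pcore_sub _ _)) leGn.
  by rewrite -cardG_gt1 /= -/R oR prime_gt1 ?max_pdiv_prime.
by apply: squarefree_dvd sqG; rewrite ?dvdn_quotient.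
Qed.

Lemma sdprod_der1_abelian (gT : finGroupType) (G H : {group gT}) :
  G^`(1) ><| H = G -> abelian H.
Proof.
case/sdprod_context=> _ sHG _ _ tiG'H; apply/derG1P/trivgP.
by rewrite -tiG'H subsetI der_sub dergS.
Qed.

(* G/[G', H] is abelian, so [G', H] = G'. *)
Lemma sdprod_der1_cent_TI (gT : finGroupType) (G H : {group gT}) :
  G^`(1) ><| H = G -> abelian G^`(1) -> coprime #|G^`(1)| #|H| -> 'C_(G^`(1))(H) = 1.
Proof.
move=> defG abG' coG'H; have [nG'G _ _ nG'H _] := sdprod_context defG.
have defG' : [~: G^`(1), H] = G^`(1).
  apply/eqP; rewrite eqEsubset commg_subl nG'H /=.
  have sRG' : [~: G^`(1), H] \subset G^`(1) by rewrite commg_subl.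
  have nRG : G \subset 'N([~: G^`(1), H]).
    by rewrite -{1}(sdprodW defG) mul_subG ?commg_normr ?sub_abelian_norm.
  have nRG' := subset_trans (der_sub 1 G) nRG.
  apply: der1_min nRG _; rewrite -[X in X / _](sdprodW defG) quotientMl //.
  rewrite abelianM !quotient_abelian ?(sdprod_der1_abelian defG) //=.
  by rewrite quotient_cents2r // commGC.
by rewrite -{1}defG' coprime_abel_cent_TI.
Qed.

Lemma expgz_id (gT : finGroupType) (x : gT) (z : int) :
  #[x] %| `|(z - 1)%R| -> expgz x z = x.
Proof.
case: z => [[|m] | m] /=.
- by rewrite dvdn1 order_eq1 => /eqP ->; rewrite expg1n.
- by rewrite subn1 order_dvdn => /eqP xm; rewrite expgS xm mulg1.
- rewrite addn0 order_dvdn expgSr => /eqP x_m2.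
  by rewrite -(mulgK x (x ^+ m.+1)) x_m2 mul1g invgK.
Qed.

(* A prime s dividing both tau - 1 and |A| yields, by Cauchy, an element of order s fixed by b. *)
Lemma coprimez_pred_fixfree_power (gT : finGroupType) (A : {group gT}) (b : gT) (tau : int) :
  (forall x, x \in A -> x ^ b = expgz x tau) -> 'C_A[b] = 1 ->
  coprimez (tau - 1)%R #|A|.
Proof.
move=> bA tiAb; rewrite /coprimez /gcdz /= eqz_nat; set d := gcdn _ _.
have d_gt0 : 0 < d by rewrite gcdn_gt0 cardG_gt0 orbT.
rewrite eqn_leq d_gt0 andbT leqNgt; apply/negP => d_gt1.
have s_pr : prime (pdiv d) := pdiv_prime d_gt1.
have [x Ax ox] := Cauchy s_pr (dvdn_trans (pdiv_dvd d) (dvdn_gcdr _ _)).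
have : x \in 'C_A[b].
  rewrite inE Ax; apply/cent1P/commgP/conjg_fixP.
  by rewrite bA // expgz_id // ox (dvdn_trans (pdiv_dvd d) (dvdn_gcdl _ _)).
by rewrite tiAb inE => /eqP x1; move: s_pr; rewrite -ox x1 order1.
Qed.

Theorem squarefree_group_structure (gT : finGroupType) (G : {group gT}) :
  squarefree #|G| ->
  [/\ cyclic G^`(1), G^`(1) :&: 'Z(G) = 1
    & exists H : {group gT},
      [/\ cyclic H, G^`(1) ><| H = G
        & forall b, generator H b -> forall tau : int,
            (forall x, x \in G^`(1) -> x ^ b = expgz x tau) ->
            coprimez (tau - 1)%R #|G^`(1)|]].
Proof.
move=> sqG; have cycG' := squarefree_der1_cyclic sqG.
have abG' := cyclic_abelian cycG'; have sG'G := der_sub 1 G.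
have hallG' : Hall G G^`(1) by rewrite /Hall sG'G squarefree_coprime // Lagrange.
have [H /complP[tiG'H defG'H]] := splitsP (SchurZassenhaus_split hallG' (der_normal 1 G)).
have sHG : H \subset G by rewrite -defG'H mulG_subr.
have defG : G^`(1) ><| H = G by rewrite sdprodE ?(subset_trans sHG (der_norm 1 G)).
have coG'H : coprime #|G^`(1)| #|H| by rewrite squarefree_coprime ?(sdprod_card defG).
have tiCG'H := sdprod_der1_cent_TI defG abG' coG'H.
split=> //.
  by apply/trivgP; rewrite -tiCG'H setIS // (subset_trans (subsetIr _ _)) ?centS.
exists H; split=> // [|b /eqP defH tau b_tau].
  rewrite squarefree_abelian_cyclic ?(sdprod_der1_abelian defG) //.
  by apply: squarefree_dvd sqG; rewrite // -(sdprod_card defG) dvdn_mull.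
by apply: coprimez_pred_fixfree_power b_tau _; rewrite -cent_cycle -defH.
Qed.

Local Close Scope group_scope.

Theorem lemma2p10 (gT : finGroupType) (G : {group gT}) (p : nat) :
  prime p -> 7 <= p -> #|G| = 30 * p ->
  [/\ cyclic (G^`(1))%g,
      ((G^`(1)) :&: 'Z(G) = 1)%g
    & exists H : {group gT},
      [/\ cyclic H,
          ((G^`(1)) ><| H = G)%g
        & forall b : gT, generator H b ->
          forall tau : int,
            (forall x, x \in (G^`(1))%g -> x ^ b = expgz x tau)%g ->
            coprimez (tau - 1)%R #|(G^`(1))%g|]].
Proof.
by move=> p_pr p_ge7 oG; apply: squarefree_group_structure; rewrite oG; apply: squarefree_30p.
Qed.
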